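(* Let $n\geq 4$. Then $d_{\Gamma_n}=2J-A_{\Gamma_n}$, where $A_{\Gamma_n}$ is the adjacency matrix of $\Gamma_n$ and $J$ is the $n!\times n!$ matrix with zero diagonal and all off-diagonal entries equal to $1$. Consequently, if $\eta_1=D_n,\eta_2,\dots,\eta_{n!}$ is the adjacency spectrum of $\Gamma_n$ (with $\eta_1=D_n$ the eigenvalue of the all-ones eigenvector), then the distance spectrum of $\Gamma_n$ is \[\{2(n!-1)-\eta_1,\,-2-\eta_2,\,\dots,\,-2-\eta_{n!}\}.\] In representation-theoretic terms, $\gamma_{(n)}=2(n!-1)-D_n$ and $\gamma_\lambda=-2-\eta_\lambda$ for every partition $\lambda\vdash n$ with $\lambda\neq(n)$.
   Context: $\mathfrak{S}_n$ is the symmetric group, $D_n$ denotes both the set of derangements in $\mathfrak{S}_n$ and its cardinality. The derangement graph $\Gamma_n$ has vertex set $\mathfrak{S}_n$, with $w$ adjacent to $sw$ for $s\in D_n$; $d_{\Gamma_n}$ is its distance matrix. Irreducible characters of $\mathfrak{S}_n$ are indexed by partitions $\lambda\vdash n$, denoted $\chi_\lambda$, with $f_\lambda=\chi_\lambda(1)$; $(n)$ is the trivial character. Define $\eta_\lambda=\frac{1}{f_\lambda}\sum_{w\in D_n}\chi_\lambda(w)$ (the eigenvalue of $A_{\Gamma_n}$ on the $\lambda$-isotypic component, of multiplicity $f_\lambda^2$), and $\gamma_\lambda=\frac{1}{f_\lambda}\sum_{w\neq 1}\ell_D(w)\chi_\lambda(w)$, where $\ell_D(w)$ is the minimal number of derangements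 whose product is $w$. *)

From HB Require Import structures.
From mathcomp Require Import all_boot all_order all_algebra all_fingroup all_solvable all_field all_character.
Set Implicit Arguments. Unset Strict Implicit. Unset Printing Implicit Defensive.
Import GRing.Theory Num.Theory.

Definition walkb (T : finType) (e : rel T) (x y : T) (k : nat) : bool :=
  [exists p : k.-tuple T, path e x p && (last x p == y)].

(* In a graph on
   #|T| vertices any reachable vertex is at distance < #|T|; unreachable
   vertices get the conventional value #|T| (never used for n >= 4). *)
Definition gdist (T : finType) (e : rel T) (x y : T) : nat :=
  find (walkb e x y) (iota 0 #|T|).

Definition derangement n (s : 'S_n) : bool := [forall i, s i != i].

Definition Dset n : {set 'S_n} := [set s | derangement s].

Definition dadj n : rel 'S_n := fun w w' => ((w' * w^-1)%g \in Dset n).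

(* vertices of Gamma_n enumerated by 'I_(n!) (well, 'I_#|'S_n|) *)
Definition pv n (i : 'I_#|{perm 'I_n}|) : 'S_n := enum_val i.

Local Open Scope ring_scope.

Definition Amat n : 'M[algC]_(#|{perm 'I_n}|) :=
  \matrix_(i, j) ((dadj (pv i) (pv j))%:R).

Definition dmat n : 'M[algC]_(#|{perm 'I_n}|) :=
  \matrix_(i, j) ((gdist (@dadj n) (pv i) (pv j))%:R).

Definition Jmat N : 'M[algC]_N := \matrix_(i, j) ((i != j)%:R).

(* minimal number of derangements whose product is w (bound #|'S_n| is only a
   search cutoff; value #|'S_n| means "not expressible") *)
Definition lD n (w : 'S_n) : nat :=
  find (fun k => [exists t : k.-tuple 'S_n,
                    all (mem (Dset n)) t && ((\prod_(s <- t) s)%g == w)])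
       (iota 0 #|{perm 'I_n}|).

Definition SG n := [set: 'S_n]%G.

Definition eta_char n (i : Iirr (SG n)) : algC :=
  (\sum_(w in Dset n) 'chi[SG n]_i w) / 'chi[SG n]_i 1%g.

Definition gamma_char n (i : Iirr (SG n)) : algC :=
  (\sum_(w : 'S_n | w != 1%g) (lD w)%:R * 'chi[SG n]_i w) / 'chi[SG n]_i 1%g.

From HB Require Import structures.
From mathcomp Require Import all_boot all_order all_algebra all_fingroup all_solvable all_field all_character.
From mathcomp Require Import zify ring.
Import GRing.Theory Num.Theory.
Set Implicit Arguments. Unset Strict Implicit. Unset Printing Implicit Defensive.
Local Open Scope ring_scope.

(* Every permutation u of n >= 4 points is a product of two derangements.
   Counting the points where u agrees with the shift i |-> i + k over all k
   gives n, so some nonzero shift k agrees with u at most once; that shift,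
   composed if needed with one transposition, is a derangement t with
   t i <> u i for all i, and u = t (t^-1 u) with t^-1 u a derangement.  Thus
   the Cayley graph Gamma_n has diameter 2, whence d = 2J - A, and
   l_D(w) = 2 - [w in D_n] for w <> 1; summing this against an irreducible
   character, which is orthogonal to the trivial one, gives gamma_lambda.
   For the spectrum, A has constant row sums D_n on the all-ones vector, so
   the matrix determinant lemma expresses det (x - 2J + A) through the
   characteristic polynomial of A at -x - 2. *)

Lemma addr_eq_self (V : zmodType) (x y : V) : (x + y == x) = (y == 0).
Proof. by rewrite -[X in _ == X]addr0 (inj_eq (addrI x)). Qed.

Section DerangementFactorization.

Variable m : nat.
Local Notation n := m.+4.
Implicit Types (u : 'S_n) (i k : 'I_n).

Definition shift_perm k : 'S_n := perm (@addIr _ k).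

Lemma shift_permE k i : shift_perm k i = i + k.
Proof. by rewrite permE. Qed.

Lemma derangement_shift_perm k : k != 0 -> derangement (shift_perm k).
Proof. by move=> k_neq0; apply/forallP => i; rewrite shift_permE addr_eq_self. Qed.

Definition shift_agree u k := [set i | u i == i + k].

Lemma sum_card_shift_agree u : (\sum_k #|shift_agree u k| = n)%N.
Proof.
transitivity (\sum_(i : 'I_n) 1)%N; last by rewrite sum1_card card_ord.
rewrite [RHS](partition_big (fun i => u i - i) xpredT) //=.
apply: eq_bigr => k _; rewrite sum1dep_card.
by apply: eq_card => i; rewrite !inE subr_eq addrC.
Qed.

Lemma exists_shift_agree_le1 u :
  exists2 k, k != 0 & (#|shift_agree u k| <= 1)%N.
Proof.
apply/exists_inP; rewrite -[X in is_true X]negbK; apply/negP => /exists_inPn many.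
have : (2 * m.+3 <= n)%N; last by lia.
rewrite -[X in (_ <= X)%N](sum_card_shift_agree u) (bigD1 0) //=.
apply: leq_trans (leq_addl _ _).
have card_neq0 : #|[pred k : 'I_n | k != 0]| = m.+3 by rewrite cardC1 card_ord.
rewrite -[in X in (X <= _)%N]card_neq0 mulnC -sum_nat_const.
by apply: leq_sum => k k_neq0; rewrite ltnNge many.
Qed.

Lemma derangement_avoiding_single u k i0 :
  k != 0 -> shift_agree u k = [set i0] ->
  exists t : 'S_n, derangement t /\ forall i, t i != u i.
Proof.
move=> k_neq0 agree_i0.
have agreeP i : (u i == i + k) = (i == i0).
  by rewrite -[i == i0]in_set1 -agree_i0 inE.
have u_i0 : u i0 = i0 + k by apply/eqP; rewrite agreeP.
have [j] : exists j, j \notin [:: i0; i0 - k; i0 + k].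
  apply/existsP; rewrite -[X in is_true X]negbK; apply/negP => /existsPn none.
  have : (n <= 3)%N; last by lia.
  apply: leq_trans (card_size [:: i0; i0 - k; i0 + k]).
  rewrite -[X in (X <= _)%N]card_ord; apply/subset_leq_card/subsetP => x _.
  by rewrite -[_ \in _]negbK none.
rewrite !inE !negb_or => /and3P [j_neq_i0 j_neq_sub j_neq_add].
(* exchanging i0 with such a j removes the only agreement of u with the shift *)
exists (tperm i0 j * shift_perm k)%g; split => [|i].
  apply/forallP => i; rewrite permM shift_permE.
  case: tpermP => [-> | -> | ? ?]; last by rewrite addr_eq_self.
    by apply: contra j_neq_sub => /eqP <-; rewrite addrK.
  by rewrite eq_sym.
rewrite permM shift_permE.
case: tpermP => [-> | -> | i_neq_i0 _].
- by rewrite u_i0 (inj_eq (addIr k)).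
- by rewrite -u_i0 (inj_eq perm_inj) eq_sym.
- by rewrite eq_sym agreeP; apply/eqP.
Qed.

Lemma derangement_avoiding u :
  exists t : 'S_n, derangement t /\ forall i, t i != u i.
Proof.
have [k k_neq0] := exists_shift_agree_le1 u.
rewrite leq_eqVlt ltnS leqn0 orbC => /orP [/eqP/cards0_eq agree0 | /cards1P [i0]].
  exists (shift_perm k); split; first exact: derangement_shift_perm.
  by move=> i; have := in_set0 i; rewrite -agree0 inE shift_permE eq_sym => ->.
exact: derangement_avoiding_single.
Qed.

End DerangementFactorization.

Lemma derangement_mul2 n (w : 'S_n) : (4 <= n)%N ->
  exists a b, [/\ a \in Dset n, b \in Dset n & w = (a * b)%g].
Proof.
case: n w => [|[|[|[|m]]]] // w _.
have [t [t_der t_avoid]] := derangement_avoiding w.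
exists t, (t^-1 * w)%g; split; [by rewrite inE | | by rewrite mulKVg].
rewrite inE; apply/forallP => i; rewrite permM.
by have := t_avoid (t^-1%g i); rewrite permKV eq_sym.
Qed.

Lemma find_iota_least (P : pred nat) k N :
  (k < N)%N -> P k -> (forall i, (i < k)%N -> ~~ P i) -> find P (iota 0 N) = k.
Proof.
move=> lt_kN Pk minimal.
have -> : N = (k + (N - k).-1.+1)%N by lia.
rewrite iotaD find_cat.
have -> : has P (iota 0 k) = false.
  by apply/negbTE/hasPn => i; rewrite mem_iota => /andP [_]; apply: minimal.
by rewrite size_iota /= Pk addn0.
Qed.

Section GraphDistance.

Variables (T : finType) (e : rel T).
Implicit Types x y z : T.

Lemma walkb0 x y : walkb e x y 0 = (x == y).
Proof.
apply/existsP/idP => [[p] | /eqP ->]; first by rewrite (tuple0 p).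
by exists [tuple]; rewrite /= eqxx.
Qed.

Lemma walkb1 x y : walkb e x y 1 = e x y.
Proof.
apply/existsP/idP => [[[[|z [|]] //= _]] | exy].
  by rewrite andbT => /andP [exz /eqP <-].
by exists [tuple y]; rewrite /= exy eqxx.
Qed.

Lemma walkb2 x y z : e x z -> e z y -> walkb e x y 2.
Proof. by move=> exz ezy; apply/existsP; exists [tuple z; y]; rewrite /= exz ezy eqxx. Qed.

Lemma gdist_diam2 x y : (2 < #|T|)%N -> (exists z, e x z && e z y) ->
  gdist e x y = if x == y then 0 else if e x y then 1 else 2.
Proof.
move=> T_gt2 [z /andP [exz ezy]]; rewrite /gdist.
have [-> | neq_xy] := eqVneq x y.
  by apply: find_iota_least; rewrite ?walkb0 ?(ltn_trans _ T_gt2).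
case: ifP => exy.
  apply: find_iota_least; rewrite ?walkb1 ?(ltn_trans _ T_gt2) //.
  by case=> // _; rewrite walkb0.
apply: find_iota_least (walkb2 exz ezy) _ => // -[|[|]] // _.
  by rewrite walkb0.
by rewrite walkb1 exy.
Qed.

End GraphDistance.

Section DerangementGraph.

Variables (n : nat) (n_ge4 : (4 <= n)%N).

Lemma card_Sn_gt2 : (2 < #|{perm 'I_n}|)%N.
Proof.
rewrite card_Sn; case: n n_ge4 => [|[|[|[|m]]]] // _.
by rewrite factS (leq_trans _ (leq_pmulr _ (fact_gt0 _))).
Qed.

Lemma one_notin_Dset : (1%g : 'S_n) \notin Dset n.
Proof.
have lt0n : (0 < n)%N by apply: leq_trans n_ge4.
by rewrite inE; apply/forallPn; exists (Ordinal lt0n); rewrite perm1 negbK.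
Qed.

Lemma dadj_diam2 (x y : 'S_n) : exists z, dadj x z && dadj z y.
Proof.
have [a [b [aD bD yx]]] := derangement_mul2 (y * x^-1)%g n_ge4.
exists (b * x)%g; rewrite /dadj mulgK bD /=.
by rewrite invMg mulgA yx mulgK.
Qed.

Lemma gdist_dadj (x y : 'S_n) :
  gdist (@dadj n) x y = if x == y then 0 else if dadj x y then 1 else 2.
Proof. exact: gdist_diam2 card_Sn_gt2 (dadj_diam2 x y). Qed.

Lemma dmat_eq : dmat n = 2%:R *: Jmat #|{perm 'I_n}| - Amat n.
Proof.
apply/matrixP => i j; rewrite !mxE gdist_dadj (inj_eq enum_val_inj).
have [<- | _] := eqVneq i j.
  by rewrite /dadj mulgV (negbTE one_notin_Dset) mulr0 subr0.
by case: dadj; rewrite /= mulr1 ?subr0 // -addrA subrr addr0.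
Qed.

Lemma lD_neq1 (w : 'S_n) : w != 1%g -> lD w = if w \in Dset n then 1 else 2.
Proof.
move=> w_neq1.
pose prodD k := [exists t : k.-tuple 'S_n,
                   all (mem (Dset n)) t && ((\prod_(s <- t) s)%g == w)].
rewrite /lD -/prodD.
have prodD0 : ~~ prodD 0.
  by apply/existsPn => t; rewrite (tuple0 t) /= big_nil eq_sym.
have prodD1 : prodD 1 = (w \in Dset n).
  apply/existsP/idP => [[[[|s [|]] //= _]] | wD].
    by rewrite big_seq1 andbT => /andP [sD /eqP <-].
  by exists [tuple w]; rewrite /= big_seq1 wD eqxx.
have lt2 := card_Sn_gt2.
case: ifP => wD.
  by apply: find_iota_least; rewrite ?prodD1 ?(ltn_trans _ lt2) // => -[].
apply: find_iota_least => //; last by case=> [|[|]] // _; rewrite prodD1 wD.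
have [a [b [aD bD w_ab]]] := derangement_mul2 w n_ge4.
by apply/existsP; exists [tuple a; b]; rewrite /= aD bD big_cons big_seq1 w_ab eqxx.
Qed.

Lemma sum_lD_mul (f : 'S_n -> algC) :
  \sum_(w : 'S_n | w != 1%g) (lD w)%:R * f w =
  2%:R * (\sum_w f w - f 1%g) - \sum_(w in Dset n) f w.
Proof.
have sum_neq1 : \sum_(w | w != 1%g) f w = \sum_w f w - f 1%g.
  by rewrite [\sum_w f w](bigD1 1%g) //= addrC addrK.
have sum_D : \sum_(w | w != 1%g) (w \in Dset n)%:R * f w = \sum_(w in Dset n) f w.
  rewrite [RHS]big_mkcond [LHS]big_mkcond; apply: eq_bigr => w _ /=.
  have [-> | _] := eqVneq w 1%g; first by rewrite (negbTE one_notin_Dset).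
  by case: (w \in Dset n); rewrite ?mul1r ?mul0r.
rewrite -sum_neq1 -sum_D mulr_sumr -sumrB; apply: eq_bigr => w w_neq1.
by rewrite lD_neq1 //; case: (w \in Dset n) => /=; ring.
Qed.

End DerangementGraph.

Lemma rowsum_Amat n (i : 'I_#|{perm 'I_n}|) : \sum_j Amat n i j = (#|Dset n|)%:R.
Proof.
pose F (w : 'S_n) : algC := ((w * (pv i)^-1)%g \in Dset n)%:R.
have -> : \sum_j Amat n i j = \sum_w F w.
  rewrite [RHS](reindex (@pv n)); last exact: onW_bij (@enum_val_bij _).
  by apply: eq_bigr => j _; rewrite mxE.
rewrite (reindex_inj (mulIg (pv i))) /F.
rewrite (eq_bigr (fun w => (w \in Dset n)%:R)) => [|w _]; last by rewrite mulgK.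
by rewrite -sum1_card natr_sum [RHS]big_mkcond; apply: eq_bigr => w _; case: (_ \in _).
Qed.

Lemma sum_irr_eq0 (gT : finGroupType) (G : {group gT}) (i : Iirr G) :
  i != 0 -> \sum_(x in G) 'chi[G]_i x = 0.
Proof.
move=> i_neq0; have G_neq0 : (#|G|%:R : algC) != 0 by rewrite pnatr_eq0 -lt0n.
have := cfdot_irr i 0; rewrite (negbTE i_neq0) cfdotE.
move/eqP; rewrite mulf_eq0 invr_eq0 (negbTE G_neq0) /= => /eqP sum_eq0.
rewrite -[RHS]sum_eq0; apply: eq_bigr => x Gx.
by rewrite irr0 cfun1E Gx conjC1 mulr1.
Qed.

Section CharacterSums.

Variables (n : nat) (n_ge4 : (4 <= n)%N).

Lemma sum_chi_Sn (i : Iirr (SG n)) : \sum_w 'chi[SG n]_i w = (i == 0)%:R * (n`!)%:R.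
Proof.
have [-> | i_neq0] := eqVneq i 0; last first.
  by rewrite mul0r -[RHS](sum_irr_eq0 i_neq0); apply: eq_bigl => w; rewrite inE.
rewrite mul1r -card_Sn -sumr_const; apply: eq_bigr => w _.
by rewrite irr0 cfun1E inE.
Qed.

Lemma gamma_char0 :
  gamma_char (0 : Iirr (SG n)) = 2%:R * ((n`!)%:R - 1) - (#|Dset n|)%:R.
Proof.
have chi0E w : 'chi[SG n]_0 w = 1 by rewrite irr0 cfun1E inE.
rewrite /gamma_char sum_lD_mul // sum_chi_Sn eqxx mul1r !chi0E divr1.
by rewrite (eq_bigr (fun=> 1)) // sumr_const.
Qed.

Lemma gamma_char_neq0 (i : Iirr (SG n)) :
  i != 0 -> gamma_char i = (- 2%:R : algC) - eta_char i.
Proof.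
move=> i_neq0; rewrite /gamma_char /eta_char sum_lD_mul // sum_chi_Sn.
rewrite (negbTE i_neq0) mul0r sub0r mulrBl mulrN mulNr -mulrA.
by rewrite mulfV ?irr1_neq0 // mulr1.
Qed.

End CharacterSums.

Lemma det_scalar_add_rank1 (R : comNzRingType) N (a : R) (x : 'cV[R]_N) (y : 'rV[R]_N) :
  a * \det (a%:M + x *m y) = a ^+ N * (a + (y *m x) 0 0).
Proof.
pose M := block_mx (a%:M : 'M_N) (- x) y (1%:M : 'M_1).
pose L := block_mx (1%:M : 'M_N) 0 (- y) (a%:M : 'M_1).
pose Q := block_mx (1%:M : 'M_N) 0 (- y) (1%:M : 'M_1).
have LM : L *m M = block_mx (a%:M) (- x) 0 (y *m x + a%:M).
  rewrite mulmx_block !mul1mx !mul0mx !addr0 mulNmx mul_mx_scalar mul_scalar_mx.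
  by rewrite addrC subrr mulmxN mulNmx opprK mulmx1.
have MQ : M *m Q = block_mx (a%:M + x *m y) (- x) 0 1%:M.
  by rewrite mulmx_block !mulmx1 !mulmx0 !mul1mx !add0r mulmxN mulNmx opprK subrr.
have detL : \det L = a by rewrite det_lblock det1 det_scalar1 mul1r.
have detQ : \det Q = 1 by rewrite det_lblock !det1 mul1r.
have := congr1 determinant LM; rewrite det_mulmx detL det_ublock det_scalar.
have := congr1 determinant MQ; rewrite det_mulmx detQ mulr1 det_ublock det1 mulr1.
by move=> -> ->; rewrite det_mx11 !mxE eqxx mulr1n addrC.
Qed.

Lemma det_sub_rank1_eigen (R : idomainType) N (B : 'M[R]_N)
    (u : 'cV[R]_N) (v : 'rV[R]_N) (lam c : R) :
  lam != 0 -> B *m u = lam *: u ->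
  lam * \det (B - c *: (u *m v)) = \det B * (lam - c * (v *m u) 0 0).
Proof.
move=> lam_neq0 Bu.
have B_factor : B *m (lam%:M - c *: (u *m v)) = lam *: (B - c *: (u *m v)).
  rewrite mulmxBr mul_mx_scalar -scalemxAr mulmxA Bu -scalemxAl.
  by rewrite scalerBr !scalerA mulrC.
have := det_scalar_add_rank1 lam (- c *: u) v.
rewrite -scalemxAl -scalemxAr scaleNr mxE mulNr => rank1.
apply: (mulfI (expf_neq0 N lam_neq0)).
rewrite mulrCA -detZ -B_factor det_mulmx mulrCA.
by rewrite rank1 mulrCA.
Qed.

Lemma prod_XsubC_opp_shift (R : comNzRingType) (c : R) (s : seq R) :
  \prod_(e <- s) (- 'X - c%:P - e%:P) = (-1) ^+ size s * \prod_(e <- s) ('X - (- c - e)%:P).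
Proof.
elim: s => [|e s IH]; first by rewrite !big_nil mul1r.
by rewrite !big_cons IH exprS rmorphB rmorphN /=; ring.
Qed.

Section ComplementaryCharPoly.

Variables (F : fieldType) (N : nat) (A : 'M[F]_N).

Lemma det_shift_char_poly (c : F) :
  \det (('X + c%:P)%:M + map_mx polyC A) = (-1) ^+ N * (char_poly A \Po (- 'X - c%:P)).
Proof.
rewrite -det_map_mx -detZ scaleN1r; congr (\det _).
apply/matrixP => i j; rewrite !mxE.
by case: eqVneq => _; rewrite /= ?mulr1n ?mulr0n rmorphB /= ?rmorph0 ?comp_polyX comp_polyC; ring.
Qed.

Variables (c D : F) (s : seq F).
Hypotheses (rowsumA : forall i, \sum_j A i j = D)
           (char_polyA : char_poly A = ('X - D%:P) * \prod_(e <- s) ('X - e%:P)).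

Let lam : {poly F} := 'X + (c + D)%:P.
Let B : 'M[{poly F}]_N := ('X + c%:P)%:M + map_mx polyC A.
Let ones_col : 'cV[{poly F}]_N := const_mx 1.
Let ones_row : 'rV[{poly F}]_N := const_mx 1.

Lemma size_char_poly_factor : N = (size s).+1.
Proof.
have := size_char_poly A; rewrite char_polyA size_Mmonic ?monic_prod_XsubC //.
  by rewrite size_XsubC size_prod_XsubC => -[].
by rewrite -size_poly_eq0 size_XsubC.
Qed.

Lemma det_shift_factor : \det B = lam * \prod_(e <- s) ('X - (- c - e)%:P).
Proof.
apply: (@mulfI _ ((-1) ^+ N)); first by rewrite signr_eq0.
rewrite det_shift_char_poly mulrA -exprMn mulrNN mulr1 expr1n mul1r.
rewrite char_polyA comp_polyM comp_polyB comp_polyX comp_polyC rmorph_prod /=.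
under eq_bigr do rewrite comp_polyB comp_polyX comp_polyC.
rewrite prod_XsubC_opp_shift {1}size_char_poly_factor exprS /lam rmorphD /=; ring.
Qed.

Lemma mul_B_ones : B *m ones_col = lam *: ones_col.
Proof.
apply/matrixP => i j; rewrite mulmxDl mul_scalar_mx !mxE.
rewrite (eq_bigr (fun k => (A i k)%:P)); last by move=> k _; rewrite !mxE mulr1.
by rewrite -rmorph_sum rowsumA /lam rmorphD /=; ring.
Qed.

Lemma char_poly_mx_scaleJ_sub :
  char_poly_mx (c *: (const_mx 1 - 1%:M) - A) = B - c%:P *: (ones_col *m ones_row).
Proof.
apply/matrixP => i j; rewrite !mxE big_ord1 !mxE.
by case: eqVneq => _ /=; rewrite ?mulr1n ?mulr0n rmorphB /= ?rmorph0; ring.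
Qed.

Lemma char_poly_scaleJ_sub :
  char_poly (c *: (const_mx 1 - 1%:M) - A) =
    ('X - (c * (N%:R - 1) - D)%:P) * \prod_(e <- s) ('X - (- c - e)%:P).
Proof.
have lam_neq0 : lam != 0 by rewrite -size_poly_eq0 size_XaddC.
have onesE : (ones_row *m ones_col) 0 0 = N%:R.
  by rewrite !mxE (eq_bigr (fun=> 1)) => [|k _]; rewrite ?sumr_const ?card_ord // !mxE mulr1.
apply: (mulfI lam_neq0); rewrite /char_poly char_poly_mx_scaleJ_sub.
rewrite (det_sub_rank1_eigen _ _ lam_neq0 mul_B_ones) onesE det_shift_factor /lam.
by rewrite !(rmorphB, rmorphD, rmorphM, rmorph1, rmorph_nat) /=; ring.
Qed.

End ComplementaryCharPoly.

Lemma JmatE N : Jmat N = const_mx 1 - 1%:M.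
Proof. by apply/matrixP => i j; rewrite !mxE; case: eqVneq; rewrite ?subrr ?subr0. Qed.

Theorem proposition3p2 (n : nat) (hn : (4 <= n)%N) :
  dmat n = 2%:R *: Jmat #|{perm 'I_n}| - Amat n
  /\ (forall s : seq algC,
        char_poly (Amat n) = ('X - (#|Dset n|)%:R%:P) * \prod_(e <- s) ('X - e%:P) ->
        char_poly (dmat n) =
          ('X - (2%:R * ((n`!)%:R - 1) - (#|Dset n|)%:R)%:P)
            * \prod_(e <- s) ('X - ((- 2%:R : algC) - e)%:P))
  /\ gamma_char (0 : Iirr (SG n)) = 2%:R * ((n`!)%:R - 1) - (#|Dset n|)%:R
  /\ (forall i : Iirr (SG n), i != 0 -> gamma_char i = (- 2%:R : algC) - eta_char i).
Proof.
split; first exact: dmat_eq.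
split.
  move=> s char_polyA; rewrite dmat_eq // JmatE -card_Sn.
  exact: char_poly_scaleJ_sub (@rowsum_Amat n) char_polyA.
split; first exact: gamma_char0.
exact: gamma_char_neq0.
Qed.
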